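(* Let $R$ be a ring with unity and involution $*$, and let $a\in R$. The following statements are equivalent. (1) $a$ is Moore-Penrose invertible. (2) $a^*a$ is strongly left $(a^*,a)$-invertible. (3) $aa^*$ is strongly left $(a,a^* )$-invertible.
   Context: $a$ is Moore-Penrose invertible if there exists $x\in R$ with $axa=a$, $xax=x$, $(ax)^*=ax$, $(xa)^*=xa$. For $u,b,c\in R$, $u$ is strongly left $(b,c)$-invertible if $b\in Rcub$ and $cub$ is regular (there exists $z$ with $cub\,z\,cub=cub$). *)

From mathcomp Require Import all_boot all_algebra.
Set Implicit Arguments. Unset Strict Implicit. Unset Printing Implicit Defensive.
Import GRing.Theory.
Local Open Scope ring_scope.

Definition involution (R : pzRingType) (star : R -> R) : Prop :=
  [/\ forall x y : R, star (x + y) = star x + star y,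
      forall x y : R, star (x * y) = star y * star x
    & forall x : R, star (star x) = x].

Definition mp_invertible (R : pzRingType) (star : R -> R) (a : R) : Prop :=
  exists x : R, [/\ a * x * a = a, x * a * x = x,
                    star (a * x) = a * x & star (x * a) = x * a].

Definition regular (R : pzRingType) (a : R) : Prop :=
  exists z : R, a * z * a = a.

Definition strongly_left_bc_invertible (R : pzRingType) (u b c : R) : Prop :=
  (exists r : R, b = r * (c * u * b)) /\ regular (c * u * b).

From mathcomp Require Import all_boot all_algebra.

Set Implicit Arguments.
Unset Strict Implicit.
Unset Printing Implicit Defensive.

Import GRing.Theory.
Local Open Scope ring_scope.

(* With h := a a^*, condition (2) reads a^* \in R h^2 with h^2 regular.
   If x is the Moore-Penrose inverse of a, then k := x^* x is an inner
   inverse of h commuting with it (h k = k h = a x), which makes h^2 regular,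
   and a^* = x a a^* = x k h^2.  Conversely, if a^* = r h^2 and h^2 z h^2 = h^2,
   then x := a^* z h is the Moore-Penrose inverse of a: the Hermitian symmetry
   of h forces h \in h^2 R \cap R h^2, so h z h does not depend on the choice of
   the inner inverse z.  Condition (3) is condition (2) for a^*, and a is
   Moore-Penrose invertible iff a^* is. *)

Lemma regular_expr2 (R : pzRingType) (h k : R) :
  h * k * h = h -> h * k = k * h -> regular (h ^+ 2).
Proof.
move=> hkh hk; exists (k ^+ 2).
have hk_idem : h * k * (h * k) = h * k by rewrite mulrA hkh.
rewrite !expr2 (_ : h * h * (k * k) * (h * h) = h * (h * k) * (k * h) * h).
  by rewrite -hk -(mulrA h) hk_idem -mulrA hkh.
by rewrite !mulrA.
Qed.

Lemma strongly_left_bc_invertible_mulE (R : pzRingType) (b c : R) :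
  strongly_left_bc_invertible (b * c) b c <->
  (exists r, b = r * (c * b) ^+ 2) /\ regular ((c * b) ^+ 2).
Proof. by rewrite /strongly_left_bc_invertible expr2 !mulrA. Qed.

Section InvolutiveRing.

Variables (R : pzRingType) (star : R -> R).
Hypothesis starM : forall x y : R, star (x * y) = star y * star x.
Hypothesis starK : involutive star.

Lemma mp_invertible_star (a : R) :
  mp_invertible star a -> mp_invertible star (star a).
Proof.
case=> x [axa xax ax_sym xa_sym]; exists (star x); split.
- by rewrite -!starM mulrA axa.
- by rewrite -!starM mulrA xax.
- by rewrite -starM xa_sym.
- by rewrite -starM ax_sym.
Qed.

Lemma mp_invertible_starE (a : R) :
  mp_invertible star (star a) <-> mp_invertible star a.
Proof.
split; last exact: mp_invertible_star.
by move/mp_invertible_star; rewrite starK.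
Qed.

Lemma mp_invertible_strongly_left (a : R) :
  mp_invertible star a -> strongly_left_bc_invertible (star a * a) (star a) a.
Proof.
case=> x [axa xax ax_sym xa_sym]; apply/strongly_left_bc_invertible_mulE.
set h := a * star a; set k := star x * x.
have star_aE : star a = x * a * star a by rewrite -{1}axa -mulrA starM xa_sym.
have hk : h * k = a * x.
  by rewrite /h /k mulrA -(mulrA a) -starM xa_sym mulrA axa.
have kh : k * h = a * x.
  by rewrite /k /h -mulrA (mulrA x) -star_aE -starM ax_sym.
split; last first.
  by apply: (regular_expr2 (k := k)); rewrite ?hk ?kh // /h mulrA axa.
exists (x * k).
rewrite expr2 mulrA -(mulrA x k) kh /h !mulrA.
by rewrite -(mulrA x a x) -(mulrA x (a * x) a) axa -star_aE.
Qed.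

Lemma strongly_left_mp_invertible (a : R) :
  strongly_left_bc_invertible (star a * a) (star a) a -> mp_invertible star a.
Proof.
move/strongly_left_bc_invertible_mulE.
move Eh : (a * star a) => h; move Ew : (h ^+ 2) => w.
case=> [[r star_aE] [z wzw]].
have h_sym : star h = h by rewrite -Eh starM starK.
have w_sym : star w = w by rewrite -Ew expr2 starM h_sym.
have aE : a = w * star r by rewrite -[LHS]starK star_aE starM w_sym.
have hE : h = w * (star r * star a) by rewrite mulrA -aE.
have hE' : h = a * r * w by rewrite -mulrA -star_aE.
have hzw : h * z * w = h by rewrite {1}hE' -!mulrA (mulrA w) wzw mulrA -hE'.
have wzh : w * z * h = h by rewrite {1}hE !mulrA wzw -aE.
have hw : h * w = w * h by rewrite -Ew !expr2 !mulrA.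
have hzh z' : w * z' * w = w -> h * z' * h = a * r * w * (star r * star a).
  move=> wz'w; rewrite {1}hE' hE mulrA -(mulrA (a * r) w z').
  by rewrite -(mulrA (a * r) (w * z') w) wz'w.
have w_star_z_w : w * star z * w = w.
  by have := congr1 star wzw; rewrite !starM w_sym mulrA.
have ax : a * (star a * z * h) = h * z * h by rewrite !mulrA Eh.
have xa : star a * z * h * a = r * (h * w) * star r.
  by rewrite star_aE aE mulrA -(mulrA r w z) -(mulrA r (w * z) h) wzh mulrA.
exists (star a * z * h); split.
- rewrite ax {1}aE mulrA -(mulrA (h * z) h w) hw mulrA hzw.
  by rewrite -expr2 Ew -aE.
- rewrite -mulrA ax !mulrA -(mulrA (star a * z) h h) -expr2 Ew.
  by rewrite -(mulrA (star a * z) w z) -(mulrA (star a * z) (w * z) h) wzh.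
- by rewrite ax !starM h_sym mulrA (hzh _ wzw) (hzh _ w_star_z_w).
- by rewrite xa !starM starK h_sym w_sym -hw mulrA.
Qed.

Lemma mp_invertible_iff_strongly_left (a : R) :
  mp_invertible star a <-> strongly_left_bc_invertible (star a * a) (star a) a.
Proof.
by split; [exact: mp_invertible_strongly_left | exact: strongly_left_mp_invertible].
Qed.

Lemma mp_invertible_iff_strongly_left_star (a : R) :
  mp_invertible star a <-> strongly_left_bc_invertible (a * star a) a (star a).
Proof.
have := mp_invertible_iff_strongly_left (star a); rewrite starK.
exact: iff_trans (iff_sym (mp_invertible_starE a)).
Qed.

End InvolutiveRing.

Theorem corollary3p14 (R : pzRingType) (star : R -> R) (a : R) :
  involution star ->
  [/\ (mp_invertible star a <-> strongly_left_bc_invertible (star a * a) (star a) a),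
      (mp_invertible star a <-> strongly_left_bc_invertible (a * star a) a (star a))
    & (strongly_left_bc_invertible (star a * a) (star a) a <->
       strongly_left_bc_invertible (a * star a) a (star a))].
Proof.
case=> _ starM starK.
have mp_iff2 := mp_invertible_iff_strongly_left starM starK a.
have mp_iff3 := mp_invertible_iff_strongly_left_star starM starK a.
by split; [exact: mp_iff2 | exact: mp_iff3 | exact: iff_trans (iff_sym mp_iff2) mp_iff3].
Qed.
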